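(* Let $r\in(0,1/36)$, $p\in(0,r)$, $h=8/15$, $a=3/15$, let $m,n\in\mathbb N$ and $D_{mn}(p,r)=\left(\frac{a\,r^{n+1}}{p^m},\,r\right)$. For $q\in D_{mn}(p,r)$ let $K_{pqr}$ be the attractor of $\mathcal S_{pqr}=\{S_1,\dots,S_6\}$ with $S_1(x)=px$, $S_2(x)=a+rx$, $S_3(x)=h-qx$, $S_4(x)=h-r+rx$, $S_5(x)=1-a-rx$, $S_6(x)=1-r+rx$. Let $\Delta_{mn}(p,r)$ be the set of $q\in D_{mn}(p,r)$ for which there exist $i\in\{2,\dots,6\}$ and $j\in\{1,\dots,5\}$ with $S_3S_1^mS_i(K_{pqr})\cap S_4S_6^nS_j(K_{pqr})\neq\emptyset$. Then $\Delta_{mn}(p,r)$ is a closed subset of $D_{mn}(p,r)$ and $\dim_H\Delta_{mn}(p,r)\le-\frac{2\log 6}{\log r}$.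
   Context: $S_1^m$ denotes $m$-fold composition; $\dim_H$ is Hausdorff dimension. *)

From HB Require Import structures.
From mathcomp Require Import all_boot all_order all_algebra.
From mathcomp Require Import all_classical all_reals all_analysis.
Set Implicit Arguments. Unset Strict Implicit. Unset Printing Implicit Defensive.
Import Order.TTheory GRing.Theory Num.Theory.
Import numFieldNormedType.Exports.
Local Open Scope classical_set_scope.
Local Open Scope ring_scope.

Section Defs.
Variable R : realType.

Definition hh : R := 8 / 15.
Definition aa : R := 3 / 15.

(* the maps S_1, ..., S_6 of S_{pqr} (index outside 1..6 : identity, never used) *)
Definition Smap (p q r : R) (i : nat) (x : R) : R :=
  match i with
  | 1 => p * x
  | 2 => aa + r * x
  | 3 => hh - q * x
  | 4 => hh - r + r * x
  | 5 => 1 - aa - r * x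
  | 6 => 1 - r + r * x
  | _ => x
  end.

Definition is_attractor (p q r : R) (K : set R) : Prop :=
  K !=set0 /\ compact K /\
  K = [set y | exists i : nat, (1 <= i <= 6)%N /\ exists2 x, K x & y = Smap p q r i x].

Definition Dmn (m n : nat) (p r : R) : set R :=
  [set q | aa * r ^+ n.+1 / p ^+ m < q < r].

Definition Deltamn (m n : nat) (p r : R) : set R :=
  [set q | Dmn m n p r q /\
     exists K, is_attractor p q r K /\
       exists i j : nat, (2 <= i <= 6)%N /\ (1 <= j <= 5)%N /\
         ((Smap p q r 3 \o iter m (Smap p q r 1) \o Smap p q r i) @` K)
         `&` ((Smap p q r 4 \o iter n (Smap p q r 6) \o Smap p q r j) @` K)
         !=set0].

(* s-dimensional Hausdorff delta-premeasure, for s > 0: infimum of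
   sum_i d_i^s over countable covers (U_i) of A with diam U_i <= d_i <= delta
   (infimum over such d_i equals infimum of sum diam(U_i)^s). *)
Definition hausdorff_pre (s delta : R) (A : set R) : \bar R :=
  ereal_inf [set v : \bar R | exists (U : nat -> set R) (d : nat -> R),
     (forall k, 0 <= d k <= delta) /\
     (forall k x y, U k x -> U k y -> `|x - y| <= d k) /\
     A `<=` \bigcup_k U k /\
     v = (\sum_(0 <= k <oo) ((d k) `^ s)%:E)%E].

(* s-dimensional Hausdorff outer measure: limit (= sup) as delta -> 0+ *)
Definition hausdorff_measure (s : R) (A : set R) : \bar R :=
  ereal_sup [set hausdorff_pre s delta A | delta in [set delta : R | 0 < delta]].

Definition hausdorff_dim (A : set R) : \bar R :=
  ereal_inf [set s%:E | s in [set s : R | 0 < s /\ hausdorff_measure s A = 0%E]].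

End Defs.

From HB Require Import structures.
From mathcomp Require Import all_boot all_order all_algebra.
From mathcomp Require Import all_classical all_reals all_analysis.
From mathcomp Require Import ring lra.
Import Order.TTheory GRing.Theory Num.Theory.
Import numFieldNormedType.Exports.
Local Open Scope classical_set_scope.
Local Open Scope ring_scope.
Set Implicit Arguments. Unset Strict Implicit. Unset Printing Implicit Defensive.

(* Write S_w for the composite of the maps along a word w, F_i = S_3 S_1^m S_i and
   G_j = S_4 S_6^n S_j.  Each S_w maps [0, 1] into itself, contracts by r^|w| and is
   (36/35)-Lipschitz in q, so the attractor (the closure of the orbit of 0) moves
   Lipschitz-continuously with q.  Closedness: if q_k -> q in D_mn with F_i K_{q_k} meeting
   G_j K_{q_k}, a pigeonhole over the 25 pairs (i, j) and the compactness of K_q give a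
   meeting pair at q.  Dimension: F_i (S_u x) = G_j (S_v y) reads q p^m X = r^(n+1) (1 - Y)
   with X = S_(iu) x >= a and Y = S_(jv) y; two parameters sharing the words iu, jv of
   length k + 1 then satisfy |q - q'| <= C r^k, where C is finite because
   q > a r^(n+1) / p^m (transversality).  So Delta_mn is covered by 36^(k+1) sets of
   diameter C r^k, and H^s(Delta_mn) = 0 as soon as 36 r^s < 1. *)

Section real_lemmas.
Variable R : realType.
Implicit Types (A B : set R) (e r s : R).

Lemma exprn_lt_eventually (rho e : R) : 0 <= rho < 1 -> 0 < e ->
  exists k0, forall k, (k0 <= k)%N -> rho ^+ k < e.
Proof.
move=> /andP[rho0 rho1] e0.
have rho_lt1 : `|rho| < 1 by rewrite ger0_norm.
have [k0 _ Hk] := cvg_expr rho_lt1 (nbhsx_ballx 0 e e0).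
exists k0 => k /Hk; rewrite /= -ball_normE /ball_ /= sub0r normrN.
by rewrite ger0_norm ?exprn_ge0.
Qed.

Lemma closure_normP A x :
  closure A x <-> forall e, 0 < e -> exists2 a, A a & `|x - a| < e.
Proof.
split=> [clx e e0 | near_x B /nbhs_ballP[e e0 eB]].
  by have [a [Aa xa]] := clx _ (nbhsx_ballx x e e0); exists a; rewrite -?ball_normE.
by have [a Aa xa] := near_x e e0; exists a; split => //; apply: eB; rewrite -ball_normE.
Qed.

Lemma compact_closed_meet A B : compact A -> closed B ->
  (forall e, 0 < e -> exists a b, [/\ A a, B b & `|a - b| < e]) -> A `&` B !=set0.
Proof.
move=> cA cB near_AB.
pose E e := [set a | A a /\ exists2 b, B b & `|a - b| < e].
pose F := filter_from [set e : R | 0 < e] E.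
have FF : ProperFilter F.
  apply: filter_from_proper => [|e /= e0]; last first.
    by have [a [b [Aa Bb ab]]] := near_AB e e0; exists a; split => //; exists b.
  apply: filter_from_filter; first by exists 1; rewrite /= ltr01.
  move=> e1 e2 /= e10 e20; exists (Num.min e1 e2); first by rewrite /= lt_min e10 e20.
  by move=> a [Aa [b Bb ab]]; split; split => //; exists b => //;
    apply: lt_le_trans ab _; rewrite ge_min lexx ?orbT.
have FA : F A by exists 1 => //= a [].
have [a [Aa clF_a]] := cA F FF FA.
exists a; split => //; apply: cB; apply/closure_normP => e e0.
have e20 : 0 < e / 2 by apply: divr_gt0.
have FE : F (E (e / 2)) by exists (e / 2).
have [c [[_ [b Bb cb]] ac]] := clF_a _ _ FE (nbhsx_ballx a (e / 2) e20).
exists b => //; move: ac; rewrite -ball_normE /= => ac.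
by rewrite -(subrK c a) -addrA; apply: le_lt_trans (ler_normD _ _) _; lra.
Qed.

Lemma pigeonhole_pos (T : eqType) (s : seq T) (P : T -> R -> Prop) :
  (forall t e e', 0 < e <= e' -> P t e -> P t e') ->
  (forall e, 0 < e -> exists2 t, t \in s & P t e) ->
  exists2 t, t \in s & forall e, 0 < e -> P t e.
Proof.
move=> P_mono; elim: s => [|a s IH] Ps; first by have [] := Ps 1 ltr01.
have [Pa|] := pselect (forall e, 0 < e -> P a e); first by exists a; rewrite ?mem_head.
move=> /existsNP[e0 /not_implyP[e00 nPa]].
suff [t ts Pt] : exists2 t, t \in s & forall e, 0 < e -> P t e.
  by exists t; rewrite // in_cons ts orbT.
apply: IH => e e_gt0.
have me_gt0 : 0 < Num.min e e0 by rewrite lt_min e_gt0 e00.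
have [t] := Ps _ me_gt0; rewrite in_cons => /orP[/eqP ->|ts] Pt.
  by exfalso; apply: nPa; apply: P_mono Pt; rewrite me_gt0 ge_min lexx orbT.
by exists t => //; apply: P_mono Pt; rewrite me_gt0 ge_min lexx.
Qed.

Lemma hausdorff_pre_ge0 s delta A : (0 <= hausdorff_pre s delta A)%E.
Proof.
apply/ereal_infP => _ [U [d [_ [_ [_ ->]]]]].
by apply: nneseries_ge0 => k _ _; rewrite lee_fin powR_ge0.
Qed.

Lemma hausdorff_pre_finite_cover s delta d A (N : nat) (U : nat -> set R) :
  0 < s -> 0 <= d <= delta ->
  A `<=` \bigcup_(t in [set t | (t < N)%N]) U t ->
  (forall t x y, U t x -> U t y -> `|x - y| <= d) ->
  (hausdorff_pre s delta A <= (N%:R * d `^ s)%:E)%E.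
Proof.
move=> s0 /andP[d0 d_delta] AU Ud.
pose U' t := if (t < N)%N then U t else set0.
pose d' t := if (t < N)%N then d else 0.
apply: (@le_trans _ _ (\sum_(0 <= t <oo) ((d' t) `^ s)%:E)%E).
  apply: ereal_inf_lbound; exists U', d'; split; [|split; [|split]] => //.
  - by move=> t; rewrite /d'; case: ifP; rewrite ?d0 ?d_delta ?lexx ?(le_trans d0).
  - by move=> t x y; rewrite /U' /d'; case: ifP => // _; exact: Ud.
  - by move=> x /AU[t /= tN Ut]; exists t; rewrite /U' ?tN.
rewrite (nneseries_split _ N); last by move=> t _; rewrite lee_fin powR_ge0.
rewrite add0n eseries0 ?adde0; last first.
  by move=> t tN _; rewrite /d' ltnNge tN /= powR0 // gt_eqF.
rewrite sumEFin lee_fin (eq_big_nat _ _ (F2 := fun=> d `^ s)); last first.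
  by move=> t /andP[_ tN]; rewrite /d' tN.
by rewrite sumr_const_nat subn0 mulr_natl.
Qed.

Lemma hausdorff_measure_eq0_covers A (N : nat) s C r :
  0 < s -> 0 <= C -> 0 <= r < 1 -> N%:R * r `^ s < 1 ->
  (forall k, exists U : nat -> set R,
     A `<=` \bigcup_(t in [set t | (t < N ^ k.+1)%N]) U t /\
     forall t x y, U t x -> U t y -> `|x - y| <= C * r ^+ k) ->
  hausdorff_measure s A = 0%E.
Proof.
move=> s0 C0 r01 Nrs covers; apply/eqP; rewrite eq_le; apply/andP; split; last first.
  apply: le_trans (hausdorff_pre_ge0 s 1 A) _.
  by apply: ereal_sup_ubound; exists 1 => //=; exact: ltr01.
apply/ereal_supP => _ [delta /= delta0 <-]; apply/lee_addgt0Pr => eps eps0.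
set rho := N%:R * r `^ s.
have rho01 : 0 <= rho < 1 by rewrite Nrs mulr_ge0 ?powR_ge0.
set Cs := C `^ s.
have Cs0 : 0 <= Cs := powR_ge0 _ _.
have [k1 rho_small] : exists k1, forall k, (k1 <= k)%N -> rho ^+ k < eps / (N%:R * Cs + 1).
  by apply: exprn_lt_eventually => //; rewrite divr_gt0 // ltr_wpDl ?mulr_ge0.
have [k2 r_small] : exists k2, forall k, (k2 <= k)%N -> r ^+ k < delta / (C + 1).
  by apply: exprn_lt_eventually => //; rewrite divr_gt0 // ltr_wpDl.
have := rho_small (maxn k1 k2) (leq_maxl _ _); have := r_small (maxn k1 k2) (leq_maxr _ _).
set k := maxn k1 k2 => rk rhok.
have [U [AU Udiam]] := covers k.
have [r0 _] := andP r01.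
have rk0 : 0 <= r ^+ k := exprn_ge0 _ r0.
have Crk_delta : 0 <= C * r ^+ k <= delta.
  rewrite mulr_ge0 //=; rewrite ltr_pdivlMr in rk; last lra.
  by nra.
apply: le_trans (hausdorff_pre_finite_cover s0 Crk_delta AU Udiam) _.
rewrite add0e lee_fin natrX powRM // -(powR_mulrn k r0) powRAC powR_mulrn ?powR_ge0 //.
have -> : N%:R ^+ k.+1 * (Cs * (r `^ s) ^+ k) = N%:R * Cs * rho ^+ k.
  by rewrite /rho exprMn exprS; ring.
rewrite ltr_pdivlMr in rhok; last by rewrite ltr_wpDl // mulr_ge0.
have : 0 <= rho ^+ k := exprn_ge0 _ (proj1 (andP rho01)).
by nra.
Qed.

Lemma hausdorff_dim_le A (s0 : R) : 0 <= s0 ->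
  (forall s, s0 < s -> hausdorff_measure s A = 0%E) -> (hausdorff_dim A <= s0%:E)%E.
Proof.
move=> s00 H0; apply/lee_addgt0Pr => e e0.
by apply: ereal_inf_lbound; exists (s0 + e) => //; split; [lra | apply: H0; lra].
Qed.

Lemma mul_powR_lt1 (b r s : R) : 0 < b -> 0 < r < 1 -> - ln b / ln r < s ->
  b * r `^ s < 1.
Proof.
move=> b0 /andP[r0 r1]; have lnr : ln r < 0 by apply: ln_lt0; rewrite r0.
rewrite ltr_ndivrMr // => hs.
by rewrite -[b]lnK ?posrE // /powR gt_eqF // -expRD expR_lt1; lra.
Qed.

Lemma dist01_le1 (x y : R) : 0 <= x <= 1 -> 0 <= y <= 1 -> `|x - y| <= 1.
Proof. by move=> /andP[? ?] /andP[? ?]; rewrite ler_norml; apply/andP; split; lra. Qed.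

Lemma transversal_bound (P Rn a L r d0 q1 q2 X1 X2 Y1 Y2 : R) :
  0 < P -> 0 <= Rn -> 0 <= a <= X1 -> 0 <= q2 <= r ->
  q1 * (P * X1) = Rn * (1 - Y1) -> q2 * (P * X2) = Rn * (1 - Y2) ->
  `|X1 - X2| <= d0 + L * `|q1 - q2| -> `|Y1 - Y2| <= d0 + L * `|q1 - q2| ->
  `|q1 - q2| * (P * a - (Rn + P * r) * L) <= (Rn + P * r) * d0.
Proof.
move=> P0 Rn0 /andP[a0 aX1] /andP[q20 q2r] E1 E2 dX dY.
have key : P * (q1 - q2) * X1 = Rn * (Y2 - Y1) - P * q2 * (X1 - X2).
  have -> : P * (q1 - q2) * X1 = q1 * (P * X1) - q2 * (P * X2) - P * q2 * (X1 - X2) by ring.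
  by rewrite E1 E2; ring.
have : P * `|q1 - q2| * X1 <= Rn * `|Y1 - Y2| + P * q2 * `|X1 - X2|.
  have -> : P * `|q1 - q2| * X1 = `|P * (q1 - q2) * X1|.
    by rewrite !normrM (gtr0_norm P0) (ger0_norm (le_trans a0 aX1)).
  rewrite key; apply: le_trans (ler_normB _ _) _.
  by rewrite !normrM distrC (ger0_norm Rn0) (gtr0_norm P0) (ger0_norm q20).
set d := `|q1 - q2|.
have d0_ge : 0 <= d0 + L * d := le_trans (normr_ge0 _) dX.
have : P * d * a <= P * d * X1.
  by rewrite ler_wpM2l //; apply: mulr_ge0; [exact: ltW | exact: normr_ge0].
have : Rn * `|Y1 - Y2| <= Rn * (d0 + L * d) by rewrite ler_wpM2l.
have : P * q2 * `|X1 - X2| <= P * r * (d0 + L * d).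
  apply: (@le_trans _ _ (P * q2 * (d0 + L * d))); first by rewrite ler_wpM2l // mulr_ge0 // ltW.
  by rewrite ler_wpM2r // ler_wpM2l // ltW.
lra.
Qed.

End real_lemmas.

Definition is_word (w : seq nat) := all (fun i => 1 <= i <= 6)%N w.

Fixpoint words (k : nat) : seq (seq nat) :=
  if k is k'.+1 then [seq i :: w | i <- iota 1 6, w <- words k'] else [:: [::]].

Lemma size_words k : size (words k) = (6 ^ k)%N.
Proof. by elim: k => // k IH; rewrite size_allpairs size_iota IH expnS. Qed.

Lemma mem_words k w : (w \in words k) = is_word w && (size w == k).
Proof.
elim: k w => [|k IH] [|i w] //; rewrite ?andbF //.
all: rewrite -[words k.+1]/[seq i :: w | i <- iota 1 6, w <- words k].
  by apply/negP => /allpairsP[[j v] [_ _]].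
rewrite [RHS]/= -andbA; apply/allpairsP/and3P => [[[j v] [+ + [-> ->]]] | [i6 w_word /eqP[sw]]].
  by rewrite (mem_iota 1 6) IH => j6 /andP[v_word /eqP sv]; split; rewrite ?sv.
by exists (i, w); rewrite (mem_iota 1 6) IH w_word sw eqxx.
Qed.

Section ifs.
Variables (R : realType) (p r : R).
Hypotheses (p_gt0 : 0 < p) (p_le_r : p <= r) (r_le : r <= 1 / 36).

Implicit Types (q x y : R) (i : nat) (w : seq nat).

Let r_gt0 : 0 < r. Proof. exact: lt_le_trans p_gt0 p_le_r. Qed.
Let r01 : 0 <= r < 1. Proof. by move: r_gt0 (r_le); lra. Qed.

Local Notation S q := (Smap p q r).

Definition Sword q (w : seq nat) : R -> R := foldr (fun i f => S q i \o f) id w.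

Definition Sslope q i : R :=
  match i with 1 => p | 2 => r | 3 => - q | 4 => r | 5 => - r | 6 => r | _ => 1 end.

Definition Soffset i : R :=
  match i with 2 => aa R | 3 => hh R | 4 => hh R - r | 5 => 1 - aa R | 6 => 1 - r | _ => 0 end.

Lemma Smap_affine q i x : S q i x = Soffset i + Sslope q i * x.
Proof. by case: i => [|[|[|[|[|[|[|i]]]]]]]; rewrite /= ?add0r ?mul1r ?mulNr. Qed.

Lemma Sslope_le q i : 0 <= q <= r -> (1 <= i <= 6)%N -> `|Sslope q i| <= r.
Proof.
move=> /andP[q0 qr].
case: i => [|[|[|[|[|[|[|i]]]]]]] //= _; rewrite ?normrN ger0_norm ?(ltW p_gt0) //; lra.
Qed.

Lemma Smap_in01 q i x : 0 <= q <= r -> (1 <= i <= 6)%N -> 0 <= x <= 1 ->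
  0 <= S q i x <= 1.
Proof.
move=> /andP[q0 qr] + /andP[x0 x1].
case: i => [|[|[|[|[|[|[|i]]]]]]] //= _; rewrite /aa /hh; move: (p_gt0) (p_le_r) (r_le).
all: by move=> *; apply/andP; split; nra.
Qed.

Lemma Smap_ge_aa q i x : 0 <= q <= r -> (2 <= i <= 6)%N -> 0 <= x <= 1 ->
  aa R <= S q i x.
Proof.
move=> /andP[q0 qr] + /andP[x0 x1].
case: i => [|[|[|[|[|[|[|i]]]]]]] //= _; rewrite /aa /hh; move: (p_le_r) (r_le).
all: by nra.
Qed.

Lemma Smap_continuous q i : continuous (S q i).
Proof.
move=> x; rewrite (funext (Smap_affine q i)).
by apply: cvgD; [exact: cvg_cst | apply: cvgM; [exact: cvg_cst | exact: cvg_id]].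
Qed.

Lemma Smap_contract q i x y : 0 <= q <= r -> (1 <= i <= 6)%N ->
  `|S q i x - S q i y| <= r * `|x - y|.
Proof.
move=> q_adm i6; rewrite !Smap_affine opprD addrACA subrr add0r -mulrBr normrM.
by rewrite ler_wpM2r // Sslope_le.
Qed.

Lemma Smap_lipq q q' i x : 0 <= x <= 1 -> `|S q i x - S q' i x| <= `|q - q'|.
Proof.
move=> /andP[x0 x1]; rewrite !Smap_affine opprD addrACA subrr add0r -mulrBl normrM.
case: i => [|[|[|[|i]]]] /=; rewrite ?subrr ?normr0 ?mul0r ?normr_ge0 //.
by rewrite opprK addrC distrC (ger0_norm x0) ler_piMr.
Qed.

Lemma Sword_cat q w1 w2 x : Sword q (w1 ++ w2) x = Sword q w1 (Sword q w2 x).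
Proof. by elim: w1 => //= i w ->. Qed.

Lemma iter_Smap q i k x : iter k (S q i) x = Sword q (nseq k i) x.
Proof. by elim: k => //= k ->. Qed.

Lemma Sword_in01 q w x : 0 <= q <= r -> is_word w -> 0 <= x <= 1 ->
  0 <= Sword q w x <= 1.
Proof.
move=> q_adm + x01; elim: w => //= i w IH /andP[i6 w_word].
exact: Smap_in01 (IH w_word).
Qed.

Lemma Sword_continuous q w : continuous (Sword q w).
Proof.
elim: w => [|i w IH] x /=; first exact: cvg_id.
by apply: continuous_comp; [exact: IH | exact: Smap_continuous].
Qed.

Lemma Sword_contract q w x y : 0 <= q <= r -> is_word w ->
  `|Sword q w x - Sword q w y| <= r ^+ size w * `|x - y|.
Proof.
move=> q_adm; elim: w => /= [|i w IH /andP[i6 w_word]]; first by rewrite mul1r.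
apply: le_trans (Smap_contract _ _ q_adm i6) _.
by rewrite exprS -mulrA ler_wpM2l ?IH // (le_trans (ltW p_gt0)).
Qed.

Lemma Sword_lipq q q' w x : 0 <= q <= r -> 0 <= q' <= r -> is_word w -> 0 <= x <= 1 ->
  `|Sword q w x - Sword q' w x| <= 36 / 35 * `|q - q'|.
Proof.
move=> q_adm q'_adm + x01; elim: w => /= [|i w IH /andP[i6 w_word]].
  by rewrite subrr normr0 mulr_ge0.
set a := Sword q w x; set b := Sword q' w x.
have b01 : 0 <= b <= 1 by apply: Sword_in01.
have := Smap_contract a b q_adm i6; have := Smap_lipq q q' i b01.
have := ler_normD (S q i a - S q i b) (S q i b - S q' i b); rewrite addrA subrK.
have := IH w_word; rewrite -/a -/b.
have := normr_ge0 (a - b); have := normr_ge0 (q - q'); move: (r_le) (p_gt0) (p_le_r).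
(* [36/35 = 1/(1 - 1/36)] survives the induction: [1 + r * 36/35 <= 36/35] *)
nra.
Qed.

Lemma Sword_dist q q' w x x' : 0 <= q <= r -> 0 <= q' <= r -> is_word w -> 0 <= x' <= 1 ->
  `|Sword q w x - Sword q' w x'| <= r ^+ size w * `|x - x'| + 36 / 35 * `|q - q'|.
Proof.
move=> q_adm q'_adm w_word x'01.
rewrite -(subrK (Sword q w x') (Sword q w x)) -addrA.
by apply: le_trans (ler_normD _ _) _; apply: lerD; [apply: Sword_contract | apply: Sword_lipq].
Qed.

Lemma Sword_dist1 q q' w x x' : 0 <= q <= r -> 0 <= q' <= r -> is_word w -> 0 <= x' <= 1 ->
  `|Sword q w x - Sword q' w x'| <= `|x - x'| + 36 / 35 * `|q - q'|.
Proof.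
move=> q_adm q'_adm w_word x'01; apply: le_trans (Sword_dist x q_adm q'_adm w_word x'01) _.
by case/andP: r01 => r0 r1; rewrite lerD2r ler_piMl // exprn_ile1 // ltW.
Qed.

Lemma attractor_Sword q K w x : is_attractor p q r K -> is_word w -> K x -> K (Sword q w x).
Proof.
case=> _ [_ KE] + Kx; elim: w => //= i w IH /andP[i6 w_word].
by rewrite KE; exists i; split => //; exists (Sword q w x); first exact: IH.
Qed.

Lemma attractor_decomp q K z k : is_attractor p q r K -> K z ->
  exists w, [/\ is_word w, size w = k & exists2 x, K x & z = Sword q w x].
Proof.
case=> _ [_ KE]; elim: k z => [|k IH] z; first by exists [::]; split => //; exists z.
rewrite {1}KE => -[i [i6 [y /IH[w [w_word sw [x Kx ->]]] ->]]].
by exists (i :: w); split; rewrite /= ?i6 ?sw //; exists x.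
Qed.

Lemma attractor_sub01 q K z : 0 <= q <= r -> is_attractor p q r K -> K z -> 0 <= z <= 1.
Proof.
move=> q_adm attK Kz.
have [B KB] : exists B : R, forall x, K x -> `|x| <= B.
  have [M [_ MK]] := compact_bounded attK.2.1.
  by exists (M + 1) => x Kx; apply: (MK (M + 1)) => //; rewrite ltrDl.
have B0 : 0 <= B := le_trans (normr_ge0 z) (KB z Kz).
suff : closure (`[0, 1] : set R) z.
  by rewrite -(closure_id _).1 /= ?in_itv //; exact: interval_closed.
apply/closure_normP => e e0.
have eB0 : 0 < e / (B + 1) by rewrite divr_gt0 // ltr_wpDl.
have [k /(_ k (leqnn k)) rk] := exprn_lt_eventually r01 eB0.
have [w [w_word sw [x Kx ->]]] := attractor_decomp k attK Kz.
exists (Sword q w 0); first by rewrite /= in_itv /= Sword_in01 //= lexx ler01.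
apply: le_lt_trans (Sword_contract x 0 q_adm w_word) _.
rewrite sw subr0; have := KB x Kx; have := normr_ge0 x; rewrite ltr_pdivlMr ?ltr_wpDl // in rk.
have := exprn_ge0 k (ltW r_gt0); nra.
Qed.

Lemma attractor_exists q : 0 <= q <= r -> exists K, is_attractor p q r K.
Proof.
move=> q_adm.
pose O := [set Sword q w 0 | w in [set w | is_word w]].
have O01 : closure O `<=` `[0, 1].
  rewrite [X in _ `<=` X](closure_id _).1; last exact: interval_closed.
  apply: closureS => _ [w w_word <-].
  by rewrite /= in_itv /= Sword_in01 //= lexx ler01.
have O_compact : compact (closure O).
  exact: subclosed_compact (@closed_closure _ O) (@segment_compact _ 0 1) O01.
have Smap_compact i : compact (S q i @` closure O).
  by apply: continuous_compact O_compact; apply: continuous_subspaceT; exact: Smap_continuous.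
exists (closure O); split; [by exists 0; apply: subset_closure; exists [::] | split => //].
apply/seteqP; split => [z Oz | _ [i [i6 [x Ox ->]]]].
(* the images [S_i(closure O)] form a closed set containing [O] (note [0 = S_1 0]) *)
- pose T := \bigcup_(i in [set` iota 1 6]) S q i @` closure O.
  have T_closed : closed T.
    rewrite /T bigcup_seq; apply: closed_bigsetU => i _.
    by apply: compact_closed; [exact: Rhausdorff | exact: Smap_compact].
  have OT : O `<=` T.
    move=> _ [[|i w] /= w_word <-].
      exists 1%N; first by rewrite /= (mem_iota 1 6).
      by exists 0; [apply: subset_closure; exists [::] | rewrite /= mulr0].
    case/andP: w_word => i6 w_word; exists i; first by rewrite /= (mem_iota 1 6).
    by exists (Sword q w 0) => //; apply: subset_closure; exists w.
  have [i] : T z by rewrite (closure_id T).1 //; exact: closureS OT z Oz.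
  by rewrite /= (mem_iota 1 6) => i6 [x Ox <-]; exists i; split => //; exists x.
(* [closure O] lies in the closed set [S_i^-1 (closure O)], which contains [O] *)
- have O_sub : closure O `<=` S q i @^-1` closure O.
    rewrite [X in _ `<=` X](closure_id _).1.
      apply: closureS => _ [w w_word <-]; apply: subset_closure.
      by exists (i :: w) => //=; rewrite i6.
    by move/continuous_closedP: (@Smap_continuous q i); apply; exact: closed_closure.
  exact: O_sub.
Qed.

Lemma attractor_near q q0 K K0 z e : 0 <= q <= r -> 0 <= q0 <= r ->
  is_attractor p q r K -> is_attractor p q0 r K0 -> K z -> 0 < e ->
  exists2 z0, K0 z0 & `|z - z0| < 36 / 35 * `|q - q0| + e.
Proof.
move=> q_adm q0_adm attK attK0 Kz e0.
have [x0 K0x0] := attK0.1.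
have [k /(_ k (leqnn k)) rk] := exprn_lt_eventually r01 e0.
have [w [w_word sw [x Kx ->]]] := attractor_decomp k attK Kz.
exists (Sword q0 w x0); first exact: attractor_Sword.
have x0_01 := attractor_sub01 q0_adm attK0 K0x0.
apply: le_lt_trans (Sword_dist x q_adm q0_adm w_word x0_01) _.
rewrite sw addrC ltrD2l.
have := dist01_le1 (attractor_sub01 q_adm attK Kx) x0_01.
by have := exprn_ge0 k (ltW r_gt0); nra.
Qed.

Lemma Sword_ge_aa q w x : 0 <= q <= r -> is_word w -> (2 <= head 0 w)%N -> 0 <= x <= 1 ->
  aa R <= Sword q w x.
Proof.
case: w => // i w q_adm /andP[/andP[_ i6] w_word] /= i2 x01.
by apply: Smap_ge_aa; rewrite ?i2 ?i6 ?Sword_in01.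
Qed.

Section delta.
Variables m n : nat.

Definition word31 w := (3 :: nseq m 1 ++ w)%N.
Definition word46 w := (4 :: nseq n 6 ++ w)%N.

Lemma is_word31 w : is_word w -> is_word (word31 w).
Proof. by move=> w_word; rewrite /is_word /= all_cat all_nseq /= orbT. Qed.

Lemma is_word46 w : is_word w -> is_word (word46 w).
Proof. by move=> w_word; rewrite /is_word /= all_cat all_nseq /= orbT. Qed.

Lemma Sword31 q w x : Sword q (word31 w) x = hh R - q * (p ^+ m * Sword q w x).
Proof.
rewrite /word31 /= Sword_cat; congr (_ - _ * _).
by elim: m => [|k IH] /=; rewrite ?mul1r // IH exprS mulrA.
Qed.

Lemma Sword46 q w x : Sword q (word46 w) x = hh R - r ^+ n.+1 * (1 - Sword q w x).
Proof.
rewrite /word46 /= Sword_cat.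
suff -> : forall k y, Sword q (nseq k 6) y = 1 - r ^+ k * (1 - y) by rewrite exprS; ring.
by elim=> [|k IH] y /=; rewrite ?mul1r ?IH ?exprS; ring.
Qed.

Lemma comp_Sword31 q i : S q 3 \o iter m (S q 1) \o S q i = Sword q (word31 [:: i]).
Proof. by apply: funext => x /=; rewrite Sword_cat iter_Smap. Qed.

Lemma comp_Sword46 q j : S q 4 \o iter n (S q 6) \o S q j = Sword q (word46 [:: j]).
Proof. by apply: funext => x /=; rewrite Sword_cat iter_Smap. Qed.

Lemma Dmn_adm q : Dmn m n p r q -> 0 <= q <= r.
Proof.
move=> /andP[lb qr]; rewrite (ltW qr) andbT; apply: le_trans (ltW lb).
by rewrite divr_ge0 ?exprn_ge0 ?mulr_ge0 ?exprn_ge0 // ?(ltW p_gt0) /aa //;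
  move: (p_gt0) (p_le_r); lra.
Qed.

Lemma Dmn_gap q : Dmn m n p r q -> aa R * r ^+ n.+1 < r * p ^+ m.
Proof.
move=> /andP[lb qr]; have := lt_trans lb qr.
by rewrite ltr_pdivrMr ?exprn_gt0 // mulrC.
Qed.

Local Notation index_pairs := [seq (i, j) | i <- iota 2 5, j <- iota 1 5].

Lemma mem_index_pairs i j : ((i, j) \in index_pairs) = (2 <= i <= 6)%N && (1 <= j <= 5)%N.
Proof.
apply/allpairsP/andP => [[[i' j'] [+ + [-> ->]]] | [i6 j5]].
  by rewrite (mem_iota 2 5) (mem_iota 1 5).
by exists (i, j); rewrite (mem_iota 2 5) (mem_iota 1 5).
Qed.

Definition meets_within q K (ij : nat * nat) e := exists x y,
  [/\ K x, K y & `|Sword q (word31 [:: ij.1]) x - Sword q (word46 [:: ij.2]) y| < e].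

Lemma Deltamn_near_meet q0 K0 e : closure (Deltamn m n p r) q0 -> Dmn m n p r q0 ->
  is_attractor p q0 r K0 -> 0 < e -> exists2 ij, ij \in index_pairs & meets_within q0 K0 ij e.
Proof.
move=> clq0 Dq0 attK0 e0; have q0_adm := Dmn_adm Dq0.
have e10 : 0 < e / 10 by rewrite divr_gt0.
have [q [Dq [K [attK [i [j [i6 [j5 [c [[x Kx xc] [y Ky yc]]]]]]]]]] q0q] :=
  (closure_normP _ _).1 clq0 _ e10.
have q_adm := Dmn_adm Dq.
have [x0 K0x0 xx0] := attractor_near q_adm q0_adm attK attK0 Kx e10.
have [y0 K0y0 yy0] := attractor_near q_adm q0_adm attK attK0 Ky e10.
exists (i, j); first by rewrite mem_index_pairs i6 j5.
rewrite /meets_within [(i, j).1]/= [(i, j).2]/=; exists x0, y0; split => //.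
move: xc yc; rewrite comp_Sword31 comp_Sword46 => xc yc.
have i_word : is_word [:: i] by case/andP: i6 => /ltnW /= -> ->.
have j_word : is_word [:: j] by case/andP: j5 => /= -> /leqW ->.
have dx := Sword_dist1 x0 q0_adm q_adm (is_word31 i_word) (attractor_sub01 q_adm attK Kx).
have dy := Sword_dist1 y q_adm q0_adm (is_word46 j_word) (attractor_sub01 q0_adm attK0 K0y0).
rewrite (distrC x0) (distrC q0) in dx; rewrite distrC in q0q.
rewrite -(subrK (Sword q (word31 [:: i]) x) (Sword q0 _ x0)) -addrA {2}xc -yc.
by apply: le_lt_trans (ler_normD _ _) _; lra.
Qed.

Lemma Deltamn_closed : closure (Deltamn m n p r) `&` Dmn m n p r `<=` Deltamn m n p r.
Proof.
move=> q0 [clq0 Dq0]; split => //; have q0_adm := Dmn_adm Dq0.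
have [K0 attK0] := attractor_exists q0_adm; exists K0; split => //.
have [[i j]] : exists2 ij, ij \in index_pairs & forall e, 0 < e -> meets_within q0 K0 ij e.
  apply: pigeonhole_pos => [ij e e' /andP[_ ee'] [x [y [Kx Ky xy]]] | e].
    by exists x, y; split => //; apply: lt_le_trans ee'.
  exact: Deltamn_near_meet.
rewrite mem_index_pairs => /andP[i6 j5] meets; exists i, j; do 2 split => //.
have Sword_compact w : compact (Sword q0 w @` K0).
  by apply: continuous_compact attK0.2.1; apply: continuous_subspaceT; exact: Sword_continuous.
rewrite comp_Sword31 comp_Sword46; apply: compact_closed_meet (Sword_compact _) _ _.
  by apply: compact_closed; [exact: Rhausdorff | exact: Sword_compact].
move=> e /meets[x [y [Kx Ky xy]]].
by exists (Sword q0 (word31 [:: i]) x), (Sword q0 (word46 [:: j]) y); split => //;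
  [exists x | exists y].
Qed.

Definition meets_at q (w : seq nat * seq nat) := exists x y,
  [/\ 0 <= x <= 1, 0 <= y <= 1 & Sword q (word31 w.1) x = Sword q (word46 w.2) y].

Lemma Deltamn_transversality : exists2 C, 0 <= C & forall k q1 q2 (w : seq nat * seq nat),
  w.1 \in words k.+1 -> w.2 \in words k.+1 -> (2 <= head 0 w.1)%N ->
  Dmn m n p r q1 -> Dmn m n p r q2 -> meets_at q1 w -> meets_at q2 w ->
  `|q1 - q2| <= C * r ^+ k.
Proof.
set P := p ^+ m; set rn := r ^+ n.+1; set c := P * aa R - (rn + P * r) * (36 / 35).
have P_gt0 : 0 < P := exprn_gt0 _ p_gt0.
have rn_ge0 : 0 <= rn := exprn_ge0 _ (ltW r_gt0).
(* [c > 0] as soon as [Dmn m n p r] is nonempty, by [Dmn_gap] *)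
have [c_gt0 | c_le0] := ltP 0 c; last first.
  exists 0 => // k q1 q2 w _ _ _ /Dmn_gap gap; exfalso.
  rewrite -/P -/rn in gap; have : r * P <= P / 36 by move: (r_le) (P_gt0); nra.
  by rewrite /c /aa in c_le0 gap *; lra.
have rnPr_ge0 : 0 <= rn + P * r by rewrite addr_ge0 // mulr_ge0 // ltW.
exists ((rn + P * r) * r / c); first by rewrite divr_ge0 ?mulr_ge0 // ltW.
move=> k q1 q2 w; rewrite !mem_words; case: w => w1 w2 /=.
move=> /andP[w1_word /eqP sw1] /andP[w2_word /eqP sw2] w1_head D1 D2.
move=> [x1 [y1 [x1_01 y1_01 E1]]] [x2 [y2 [x2_01 y2_01 E2]]].
have q1_adm := Dmn_adm D1; have q2_adm := Dmn_adm D2.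
move: E1 E2; rewrite !Sword31 !Sword46 /= -/P -/rn => /addrI/oppr_inj E1 /addrI/oppr_inj E2.
have dX := Sword_dist x1 q1_adm q2_adm w1_word x2_01.
have dY := Sword_dist y1 q1_adm q2_adm w2_word y2_01.
rewrite sw1 in dX; rewrite sw2 in dY.
have rk_ge0 : 0 <= r ^+ k.+1 := exprn_ge0 _ (ltW r_gt0).
have shrink a b : 0 <= a <= 1 -> 0 <= b <= 1 -> r ^+ k.+1 * `|a - b| <= r ^+ k.+1.
  by move=> a01 b01; rewrite ler_piMr ?dist01_le1.
have X1_ge : 0 <= aa R <= Sword q1 w1 x1 by rewrite Sword_ge_aa // andbT /aa; lra.
have := transversal_bound P_gt0 rn_ge0 X1_ge q2_adm E1 E2
  (le_trans dX (lerD (shrink _ _ x1_01 x2_01) (lexx _)))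
  (le_trans dY (lerD (shrink _ _ y1_01 y2_01) (lexx _))).
by rewrite -/c mulrAC ler_pdivlMr // -mulrA -exprS.
Qed.

Lemma Deltamn_meets k q : Deltamn m n p r q ->
  exists2 w, w \in [seq (w1, w2) | w1 <- words k.+1, w2 <- words k.+1] &
    (2 <= head 0 w.1)%N /\ meets_at q w.
Proof.
move=> [Dq [K [attK [i [j [i6 [j5 [c [[x Kx xc] [y Ky yc]]]]]]]]]].
have q_adm := Dmn_adm Dq.
have [u [u_word su [x' Kx' xE]]] := attractor_decomp k attK Kx.
have [v [v_word sv [y' Ky' yE]]] := attractor_decomp k attK Ky.
exists (i :: u, j :: v).
  apply/allpairsP; exists (i :: u, j :: v); rewrite !mem_words /= su sv u_word v_word !eqxx.
  by case/andP: i6 => /ltnW -> ->; case/andP: j5 => -> /leqW ->.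
split; first by case/andP: i6.
exists x', y'; split; [exact: attractor_sub01 q_adm attK Kx' |
  exact: attractor_sub01 q_adm attK Ky' |].
move: xc yc; rewrite comp_Sword31 comp_Sword46 xE yE => xc yc.
have -> : word31 (i :: u) = word31 [:: i] ++ u by rewrite /word31 /= -catA.
have -> : word46 (j :: v) = word46 [:: j] ++ v by rewrite /word46 /= -catA.
by rewrite !Sword_cat xc yc.
Qed.

Lemma Deltamn_covers : exists2 C, 0 <= C & forall k, exists U : nat -> set R,
  Deltamn m n p r `<=` \bigcup_(t in [set t | (t < 36 ^ k.+1)%N]) U t /\
  forall t q1 q2, U t q1 -> U t q2 -> `|q1 - q2| <= C * r ^+ k.
Proof.
have [C C0 transv] := Deltamn_transversality; exists C => // k.
pose pairs := [seq (w1, w2) | w1 <- words k.+1, w2 <- words k.+1].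
pose cell (w : seq nat * seq nat) :=
  [set q | Dmn m n p r q /\ (2 <= head 0 w.1)%N /\ meets_at q w].
(* past [size pairs], [nth] returns [([::], [::])], whose cell is empty as [head 0 [::] = 0] *)
exists (fun t => cell (nth ([::], [::]) pairs t)); split.
  move=> q Dq; have [w w_mem w_meets] := Deltamn_meets k Dq.
  exists (index w pairs); last by rewrite /= nth_index //; split => //; case: Dq.
  have : (index w pairs < size pairs)%N by rewrite index_mem.
  by rewrite size_allpairs size_words -expnMn.
move=> t q1 q2 [D1 [w_head meets1]] [D2 [_ meets2]].
have t_lt : (t < size pairs)%N.
  by rewrite ltnNge; apply: contraTN w_head => /(nth_default ([::], [::])) ->.
have /allpairsP[[w1 w2] [w1_mem w2_mem w_eq]] := mem_nth ([::], [::]) t_lt.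
by rewrite w_eq in w_head meets1 meets2; exact: transv w_head D1 D2 meets1 meets2.
Qed.

Lemma Deltamn_dim_le : (hausdorff_dim (Deltamn m n p r) <= (- (2 * ln 6) / ln r)%:E)%E.
Proof.
have ln6 : 0 < ln (6 : R) by rewrite ln_gt0 //; lra.
have lnr : ln r < 0 by apply: ln_lt0; case/andP: r01 => _ ->; rewrite r_gt0.
have s0_ge0 : 0 <= - (2 * ln 6) / ln r.
  by apply: mulr_le0; [rewrite oppr_le0 pmulr_rge0 // ltW | rewrite invr_le0 ltW].
have [C C0 covers] := Deltamn_covers.
apply: hausdorff_dim_le => // s s_gt.
apply: (hausdorff_measure_eq0_covers (N := 36) _ C0 _ _ covers).
- exact: le_lt_trans s0_ge0 s_gt.
- exact: r01.
apply: mul_powR_lt1 => //; first by case/andP: r01 => _ ->; rewrite r_gt0.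
have -> : ln 36 = 2 * ln (6 : R).
  by rewrite (_ : 36 = 6 * 6) ?lnM ?posrE //; lra.
exact: s_gt.
Qed.

End delta.

End ifs.

Theorem lemma4 (R : realType) (r p : R) (m n : nat)
  (hr0 : 0 < r) (hr1 : r < 1 / 36) (hp0 : 0 < p) (hpr : p < r) :
  (Deltamn m n p r `<=` Dmn m n p r /\
   closure (Deltamn m n p r) `&` Dmn m n p r `<=` Deltamn m n p r) /\
  (hausdorff_dim (Deltamn m n p r) <= (- (2 * ln 6) / ln r)%:E)%E.
Proof.
have [p_le_r r_le] := (ltW hpr, ltW hr1).
split; first split.
- by move=> q [].
- exact: (Deltamn_closed hp0 p_le_r r_le).
- exact: (Deltamn_dim_le hp0 p_le_r r_le m n).
Qed.
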